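(* For every $\lambda\in\Lambda^+$, every nonzero $\mathfrak g$-submodule of $\mathcal V(\lambda)$ contains $1\otimes L^0(\lambda)$. Consequently $\mathcal V(\lambda)\cong\nabla(\lambda)$ has a unique simple submodule, namely $U(\mathfrak g)(1\otimes L^0(\lambda))$.
   Context: $\mathbb F$ algebraically closed of characteristic $0$, $m,n\ge1$. $\mathcal R=\mathbb F[x_1,\dots,x_m]\otimes\Lambda(y_1,\dots,y_n)$ ($x_i$ even, $y_s$ odd), $\mathfrak g=W(m,n)$ the Lie superalgebra of superderivations of $\mathcal R$, free over $\mathcal R$ on $\partial_i$ (even, $\partial_ix_j=\delta_{ij}$) and $D_t$ (odd, $D_ty_s=\delta_{ts}$); $\mathfrak g_0=\mathrm{span}\{x_i\partial_j,x_iD_t,y_s\partial_j,y_sD_t\}\cong\mathfrak{gl}(m|n)$. $\Lambda^+$ is the set of dominant integral weights of $\mathfrak{gl}(m|n)$ and $L^0(\lambda)$ the finite-dimensional irreducible $\mathfrak g_0$-module of highest weight $\lambda$, representation $\xi$. $\mathcal V(\lambda)=\mathcal R\otimes L^0(\lambda)$ with action (homogeneous $f,g$): $f\partial_i.(g\otimes v)=f\partial_i(g)\otimes v+\sum_j\partial_j(f)g\otimes\xi(x_j\partial_i)v+(-1)^{\wp(f)+\wp(g)+1}\sum_jD_j(f)g\otimes\xi(y_j\partial_i)v$, $fD_i.(g\otimes v)=fD_i(g)\otimes v+(-1)^{\wp(g)}\sum_j\partial_j(f)g\otimes\xi(x_jD_i)v+(-1)^{\wp(f)+1}\sum_jD_j(f)g\otimes\xi(y_jD_i)v$.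 $\nabla(\lambda)=\mathrm{Hom}_{U(\mathfrak g_{\ge0})}(U(\mathfrak g),L^0(\lambda))$ is the costandard module, isomorphic to $\mathcal V(\lambda)$. *)

From HB Require Import structures.
From mathcomp Require Import all_boot all_order all_algebra.
From mathcomp Require Import mpoly.
Set Implicit Arguments. Unset Strict Implicit. Unset Printing Implicit Defensive.
Import Order.TTheory GRing.Theory.
Local Open Scope ring_scope.

Section Wmn.
Variables (F : fieldType) (m n : nat).

(* R = F[x_1..x_m] (x) Lambda(y_1..y_n): f = \sum_S f S * y^S with
   y^S = y_{s_1} ... y_{s_k}, s_1 < ... < s_k. *)
Definition Rsup := {ffun {set 'I_n} -> {mpoly F[m]}}.

Definition R1 : Rsup := [ffun S => if S == set0 then 1 else 0].

(* sign of y^S y^T = ysign S T * y^(S :|: T) for disjoint S, T *)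
Definition ysign (S T : {set 'I_n}) : F :=
  (-1) ^+ #|[set st : 'I_n * 'I_n | [&& st.1 \in S, st.2 \in T & (st.2 < st.1)%N]]|.

Definition Rmul (f g : Rsup) : Rsup :=
  [ffun U => \sum_(S : {set 'I_n}) \sum_(T : {set 'I_n} | [disjoint S & T] && (S :|: T == U))
      ysign S T *: (f S * g T)].

Definition Rx (i : 'I_m) (f : Rsup) : Rsup := [ffun S => 'X_i * f S].

Definition Rdx (i : 'I_m) (f : Rsup) : Rsup := [ffun S => mderiv i (f S)].

(* odd (left) derivation d/dy_t: D_t(y^S) = (-1)^#{s in S | s < t} y^(S\t) if t in S *)
Definition Rdy (t : 'I_n) (f : Rsup) : Rsup :=
  [ffun U : {set 'I_n} => if t \in U then 0
             else (-1) ^+ #|[set s in U | (s < t)%N]| *: f (t |: U)].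

Definition Reven (f : Rsup) : Rsup := [ffun S : {set 'I_n} => if odd #|S| then 0 else f S].
Definition Rodd (f : Rsup) : Rsup := [ffun S : {set 'I_n} => if odd #|S| then f S else 0].

(* indices of gl(m|n) = g_0: z_a = x_a (a < m, even) or y_(a-m) (odd);
   E a b stands for z_a d_b, where d_b = d/dx_b or D_(b-m). *)
Definition ipar (a : 'I_(m + n)) : bool := (m <= a)%N.

Definition sgn2 (p q : bool) : F := (-1) ^+ (p && q).

(* A finite-dimensional super representation xi of g_0 = gl(m|n) on F^d
   (column vectors), with parity pL of the standard basis vectors. *)
Definition is_even_rep (d : nat) (pL : 'I_d -> bool)
    (xi : 'I_(m + n) -> 'I_(m + n) -> 'M[F]_d) : Prop :=
  (forall a b (l k : 'I_d), pL l != pL k (+) (ipar a (+) ipar b) -> xi a b l k = 0) /\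
  (forall a b c e,
     xi a b *m xi c e - sgn2 (ipar a (+) ipar b) (ipar c (+) ipar e) *: (xi c e *m xi a b)
     = (b == c)%:R *: xi a e
       - sgn2 (ipar a (+) ipar b) (ipar c (+) ipar e) *: ((e == a)%:R *: xi c b)).

Definition is_subspace (V : lmodType F) (P : V -> Prop) : Prop :=
  P 0 /\ (forall u v, P u -> P v -> P (u + v)) /\ (forall (c : F) u, P u -> P (c *: u)).

Definition cpart d (pL : 'I_d -> bool) (p : bool) (v : 'cV[F]_d) : 'cV[F]_d :=
  \col_k (if pL k == p then v k 0 else 0).

Definition rep_irreducible d (pL : 'I_d -> bool) (xi : 'I_(m + n) -> 'I_(m + n) -> 'M[F]_d) :=
  forall P : 'cV[F]_d -> Prop,
    is_subspace P -> (forall v, P v -> P (cpart pL false v)) ->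
    (forall a b v, P v -> P (xi a b *m v)) ->
    (forall v, P v -> v = 0) \/ (forall v, P v).

(* lambda is the highest weight w.r.t. the standard Borel (z_a d_b, a < b)
   and Cartan subalgebra spanned by z_a d_a *)
Definition is_highest_weight d (xi : 'I_(m + n) -> 'I_(m + n) -> 'M[F]_d)
    (lam : 'I_(m + n) -> F) : Prop :=
  exists v : 'cV[F]_d, v != 0 /\
    (forall a b : 'I_(m + n), (a < b)%N -> xi a b *m v = 0) /\
    (forall a, xi a a *m v = lam a *: v).

Definition dominant_integral (lam : 'I_(m + n) -> F) : Prop :=
  forall a b : 'I_(m + n), nat_of_ord b = a.+1 -> ipar a = ipar b ->
    exists k : nat, lam a - lam b = k%:R.

(* V(lambda) = R (x) L; an element u is \sum_k u k (x) e_k *)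
Definition Vmod d := {ffun 'I_d -> Rsup}.

Definition Vtensor d (g : Rsup) (v : 'cV[F]_d) : Vmod d := [ffun k => v k 0 *: g].

Definition Vone d (v : 'cV[F]_d) : Vmod d := Vtensor R1 v.

Definition bsign (b : bool) : F := (-1) ^+ b.

Section Action.
Variables (d : nat) (xi : 'I_(m + n) -> 'I_(m + n) -> 'M[F]_d).
Let xx (j i : 'I_m) := xi (lshift n j) (lshift n i).
Let yx (j : 'I_n) (i : 'I_m) := xi (rshift m j) (lshift n i).
Let xy (j : 'I_m) (i : 'I_n) := xi (lshift n j) (rshift m i).
Let yy (j i : 'I_n) := xi (rshift m j) (rshift m i).

(* action of f d_i (f homogeneous of parity pf) on g (x) e_k, g of parity pg *)
Definition act_dx_hom (pf : bool) (f : Rsup) (i : 'I_m) (pg : bool) (g : Rsup) (k : 'I_d)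
  : Vmod d :=
  Vtensor (Rmul f (Rdx i g)) (delta_mx k 0)
  + \sum_(j < m) Vtensor (Rmul (Rdx j f) g) (xx j i *m delta_mx k 0)
  + bsign (pf (+) pg (+) true) *:
      \sum_(j < n) Vtensor (Rmul (Rdy j f) g) (yx j i *m delta_mx k 0).

Definition act_dy_hom (pf : bool) (f : Rsup) (i : 'I_n) (pg : bool) (g : Rsup) (k : 'I_d)
  : Vmod d :=
  Vtensor (Rmul f (Rdy i g)) (delta_mx k 0)
  + bsign pg *: \sum_(j < m) Vtensor (Rmul (Rdx j f) g) (xy j i *m delta_mx k 0)
  + bsign (pf (+) true) *:
      \sum_(j < n) Vtensor (Rmul (Rdy j f) g) (yy j i *m delta_mx k 0).

Definition act_dx (f : Rsup) (i : 'I_m) (u : Vmod d) : Vmod d :=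
  \sum_(k < d)
    (act_dx_hom false (Reven f) i false (Reven (u k)) k
     + act_dx_hom false (Reven f) i true (Rodd (u k)) k
     + act_dx_hom true (Rodd f) i false (Reven (u k)) k
     + act_dx_hom true (Rodd f) i true (Rodd (u k)) k).

Definition act_dy (f : Rsup) (i : 'I_n) (u : Vmod d) : Vmod d :=
  \sum_(k < d)
    (act_dy_hom false (Reven f) i false (Reven (u k)) k
     + act_dy_hom false (Reven f) i true (Rodd (u k)) k
     + act_dy_hom true (Rodd f) i false (Reven (u k)) k
     + act_dy_hom true (Rodd f) i true (Rodd (u k)) k).

End Action.

(* even component of u in V = R (x) L: parity of g (x) e_k is p(g) + pL k *)
Definition Veven d (pL : 'I_d -> bool) (u : Vmod d) : Vmod d :=
  [ffun k => if pL k then Rodd (u k) else Reven (u k)].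

Definition is_submodule d (pL : 'I_d -> bool) (xi : 'I_(m + n) -> 'I_(m + n) -> 'M[F]_d)
    (M : Vmod d -> Prop) : Prop :=
  [/\ is_subspace M,
      (forall u, M u -> M (Veven pL u)),
      (forall f i u, M u -> M (act_dx xi f i u)) &
      (forall f i u, M u -> M (act_dy xi f i u))].

Definition is_simple_submodule d pL xi (M : Vmod d -> Prop) : Prop :=
  is_submodule pL xi M /\ (exists u, M u /\ u != 0) /\
  forall N : Vmod d -> Prop, is_submodule pL xi N -> (forall u, N u -> M u) ->
     (forall u, N u -> u = 0) \/ (forall u, M u -> N u).

Definition gen_one d pL xi : Vmod d -> Prop :=
  fun u => forall N : Vmod d -> Prop, is_submodule pL xi N ->
    (forall v, N (Vone v)) -> N u.

End Wmn.

From HB Require Import structures.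
From mathcomp Require Import all_boot all_order all_algebra.
From mathcomp Require Import mpoly.
From Stdlib Require Import Classical.
Set Implicit Arguments. Unset Strict Implicit. Unset Printing Implicit Defensive.
Import GRing.Theory.
Local Open Scope ring_scope.

(* Let M be a nonzero submodule of V = R (x) L. The operator 1 D_t acts on
   R (x) L through the R-factor only, and removes y_t; applying such operators
   to an element of M of top y-degree produces a nonzero element of M with no
   y's. Among its polynomial coefficients pick one of maximal size and apply
   d^alpha, alpha its leading monomial: every coefficient becomes a constant,
   and in characteristic 0 the leading one does not vanish, so M contains a
   nonzero 1 (x) w. Finally x_j d_i, x_j D_i, y_j d_i, y_j D_i act on 1 (x) L
   as xi does on L, so {w | 1 (x) w \in M} is a graded g_0-submodule of L,
   which is all of L by irreducibility. *)

Section Superpolynomials.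
Variables (F : fieldType) (m n : nat).
Local Notation Rs := (Rsup F m n).

Lemma Rmul0l (g : Rs) : Rmul 0 g = 0.
Proof.
apply/ffunP=> U; rewrite !ffunE big1 // => S _; rewrite big1 // => T _.
by rewrite ffunE mul0r scaler0.
Qed.

Lemma Rmul0r (f : Rs) : Rmul f 0 = 0.
Proof.
apply/ffunP=> U; rewrite !ffunE big1 // => S _; rewrite big1 // => T _.
by rewrite ffunE mulr0 scaler0.
Qed.

Lemma Rmul1l (g : Rs) : Rmul (R1 F m n) g = g.
Proof.
apply/ffunP=> U; rewrite ffunE (bigD1 set0) //= [X in _ + X]big1 ?addr0; last first.
  by move=> S hS; rewrite big1 // => T _; rewrite ffunE (negbTE hS) mul0r scaler0.
rewrite (eq_bigl (pred1 U)); last first.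
  by move=> T; rewrite set0U (_ : [disjoint set0 & T]) //; apply/pred0P=> x; rewrite !inE.
rewrite big_pred1_eq ffunE eqxx mul1r.
rewrite /ysign (_ : [set st | _] = set0) ?cards0 ?expr0 ?scale1r //.
by apply/setP=> st; rewrite !inE.
Qed.

Lemma Rdx0 i : Rdx i (0 : Rs) = 0.
Proof. by apply/ffunP=> S; rewrite !ffunE mderiv0. Qed.

Lemma RdxD i (f g : Rs) : Rdx i (f + g) = Rdx i f + Rdx i g.
Proof. by apply/ffunP=> S; rewrite !ffunE mderivD. Qed.

Lemma RdxZ i c (f : Rs) : Rdx i (c *: f) = c *: Rdx i f.
Proof. by apply/ffunP=> S; rewrite !ffunE mderivZ. Qed.

Lemma Rdy0 i : Rdy i (0 : Rs) = 0.
Proof. by apply/ffunP=> S; rewrite !ffunE; case: ifP; rewrite ?scaler0. Qed.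

Lemma RdyD i (f g : Rs) : Rdy i (f + g) = Rdy i f + Rdy i g.
Proof. by apply/ffunP=> S; rewrite !ffunE; case: ifP; rewrite ?addr0 // scalerDr. Qed.

Lemma RdyZ i c (f : Rs) : Rdy i (c *: f) = c *: Rdy i f.
Proof. by apply/ffunP=> S; rewrite !ffunE; case: ifP; rewrite ?scaler0 // !scalerA mulrC. Qed.

Lemma Rdx_R1 i : Rdx i (R1 F m n) = 0.
Proof.
apply/ffunP=> S; rewrite !ffunE; case: ifP => _; last by rewrite mderiv0.
by rewrite -mpolyC1 mderivC.
Qed.

Lemma Rdy_R1 i : Rdy i (R1 F m n) = 0.
Proof.
apply/ffunP=> S; rewrite !ffunE; case: ifP => // _.
rewrite (_ : (i |: S == set0) = false) ?scaler0 //.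
by apply/negbTE/set0Pn; exists i; rewrite !inE eqxx.
Qed.

Lemma Reven_add_Rodd (f : Rs) : Reven f + Rodd f = f.
Proof. by apply/ffunP=> S; rewrite !ffunE; case: ifP; rewrite ?add0r ?addr0. Qed.

Lemma Reven_scaleR1 (c : F) : Reven (c *: R1 F m n) = c *: R1 F m n.
Proof.
apply/ffunP=> S; rewrite !ffunE; case: eqP => [->|]; first by rewrite cards0.
by rewrite scaler0; case: ifP.
Qed.

Lemma Rodd_scaleR1 (c : F) : Rodd (c *: R1 F m n) = 0.
Proof.
apply/ffunP=> S; rewrite !ffunE; case: eqP => [->|]; first by rewrite cards0.
by rewrite scaler0; case: ifP.
Qed.

Lemma Reven_R1 : Reven (R1 F m n) = R1 F m n.
Proof. by rewrite -(scale1r (R1 F m n)) Reven_scaleR1. Qed.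

Lemma Rodd_R1 : Rodd (R1 F m n) = 0.
Proof. by rewrite -(scale1r (R1 F m n)) Rodd_scaleR1. Qed.

Definition Rxvar (j : 'I_m) : Rs := [ffun S => if S == set0 then 'X_j else 0].
Definition Ryvar (j : 'I_n) : Rs := [ffun S => if S == [set j] then 1 else 0].

Lemma Reven_Rxvar j : Reven (Rxvar j) = Rxvar j.
Proof. by apply/ffunP=> S; rewrite !ffunE; case: eqP => [->|]; rewrite ?cards0 //; case: ifP. Qed.

Lemma Rodd_Rxvar j : Rodd (Rxvar j) = 0.
Proof. by apply/ffunP=> S; rewrite !ffunE; case: eqP => [->|]; rewrite ?cards0 //; case: ifP. Qed.

Lemma Reven_Ryvar j : Reven (Ryvar j) = 0.
Proof. by apply/ffunP=> S; rewrite !ffunE; case: eqP => [->|]; rewrite ?cards1 //; case: ifP. Qed.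

Lemma Rodd_Ryvar j : Rodd (Ryvar j) = Ryvar j.
Proof. by apply/ffunP=> S; rewrite !ffunE; case: eqP => [->|]; rewrite ?cards1 //; case: ifP. Qed.

Lemma Rdx_Rxvar i j : Rdx i (Rxvar j) = (i == j)%:R *: R1 F m n.
Proof.
apply/ffunP=> S; rewrite !ffunE; case: (S =P set0) => _; last by rewrite mderiv0 scaler0.
rewrite mderivX mnm1E eq_sym; case: (i =P j) => [->|]; last by rewrite !scale0r.
have -> : (U_(j) - U_(j) = 0)%MM by apply/mnmP=> l; rewrite mnmBE subnn mnm0E.
by rewrite mpolyX0.
Qed.

Lemma Rdy_Rxvar i j : Rdy i (Rxvar j) = 0.
Proof.
apply/ffunP=> S; rewrite !ffunE; case: ifP => // _.
rewrite (_ : (i |: S == set0) = false) ?scaler0 //.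
by apply/negbTE/set0Pn; exists i; rewrite !inE eqxx.
Qed.

Lemma Rdx_Ryvar i j : Rdx i (Ryvar j) = 0.
Proof.
apply/ffunP=> S; rewrite !ffunE; case: ifP => _; last by rewrite mderiv0.
by rewrite -mpolyC1 mderivC.
Qed.

Lemma Rdy_Ryvar i j : Rdy i (Ryvar j) = (i == j)%:R *: R1 F m n.
Proof.
apply/ffunP=> S; rewrite !ffunE; case: ifP => hiS.
  by rewrite (_ : (S == set0) = false) ?scaler0 //; apply/negbTE/set0Pn; exists i.
have [->|/set0Pn[s hs]] := eqVneq S set0.
  rewrite setU0 (inj_eq set1_inj) (_ : [set s in set0 | _] = set0); last first.
    by apply/setP=> s; rewrite !inE.
  by rewrite cards0 expr0 scale1r; case: eqP; rewrite ?scale1r ?scale0r.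
rewrite scaler0; case: eqP => [hS|_]; last by rewrite scaler0.
have := setU11 i S; have := setU1r i hs; rewrite hS !inE => /eqP hsj /eqP hij.
by rewrite hij -hsj hs in hiS.
Qed.

End Superpolynomials.

Section Tensor.
Variables (F : fieldType) (m n d : nat).
Local Notation Rs := (Rsup F m n).
Local Notation V := (Vmod F m n d).

Lemma Vtensor0 (v : 'cV[F]_d) : Vtensor (0 : Rs) v = 0.
Proof. by apply/ffunP=> k; rewrite !ffunE scaler0. Qed.

Lemma VtensorD (g h : Rs) (v : 'cV[F]_d) : Vtensor (g + h) v = Vtensor g v + Vtensor h v.
Proof. by apply/ffunP=> k; rewrite !ffunE scalerDr. Qed.

Lemma VtensorZ (c : F) (g : Rs) (v : 'cV[F]_d) : Vtensor (c *: g) v = Vtensor g (c *: v).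
Proof. by apply/ffunP=> k; rewrite !ffunE scalerA mxE mulrC. Qed.

Lemma Vtensor_sumr (g : Rs) (v : 'I_d -> 'cV[F]_d) :
  \sum_k Vtensor g (v k) = Vtensor g (\sum_k v k).
Proof.
apply/ffunP=> k; rewrite !ffunE sum_ffunE summxE scaler_suml.
by apply: eq_bigr => i _; rewrite ffunE.
Qed.

Lemma Vtensor_delta_sum (u : V) : \sum_k Vtensor (u k) (delta_mx k 0) = u.
Proof.
apply/ffunP=> k; rewrite sum_ffunE (bigD1 k) //= big1 ?addr0.
  by rewrite ffunE mxE !eqxx scale1r.
by move=> i hi; rewrite ffunE mxE eq_sym (negbTE hi) scale0r.
Qed.

Lemma Vtensor_kronecker (I : finType) (j : I) (g : Rs) (v : I -> 'cV[F]_d) :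
  \sum_l Vtensor (Rmul ((l == j)%:R *: R1 F m n) g) (v l) = Vtensor g (v j).
Proof.
rewrite (bigD1 j) //= eqxx scale1r Rmul1l big1 ?addr0 // => l /negbTE->.
by rewrite scale0r Rmul0l Vtensor0.
Qed.

Lemma VoneE (w : 'cV[F]_d) k : Vone m n w k = w k 0 *: R1 F m n.
Proof. by rewrite ffunE. Qed.

Lemma Vone_mulmx (A : 'M[F]_d) (w : 'cV[F]_d) :
  \sum_k Vtensor (w k 0 *: R1 F m n) (A *m delta_mx k 0) = Vone m n (A *m w).
Proof.
under eq_bigr do rewrite VtensorZ scalemxAr.
rewrite Vtensor_sumr -mulmx_sumr; congr (Vone m n (A *m _)).
by rewrite [RHS]matrix_sum_delta; apply: eq_bigr => k _; rewrite big_ord1.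
Qed.

Lemma VoneD (v1 v2 : 'cV[F]_d) : Vone m n (v1 + v2) = Vone m n v1 + Vone m n v2.
Proof. by apply/ffunP=> k; rewrite !ffunE mxE scalerDl. Qed.

Lemma VoneZ c (v : 'cV[F]_d) : Vone m n (c *: v) = c *: Vone m n v.
Proof. by apply/ffunP=> k; rewrite !ffunE mxE scalerA. Qed.

Lemma Vone0 : Vone m n (0 : 'cV[F]_d) = 0.
Proof. by apply/ffunP=> k; rewrite !ffunE mxE scale0r. Qed.

Lemma Vone_eq0 (v : 'cV[F]_d) : (Vone m n v == 0) = (v == 0).
Proof.
apply/eqP/eqP=> [hv|->]; last exact: Vone0.
apply/matrixP=> k j; rewrite ord1 mxE.
have /ffunP/(_ set0) := congr1 (fun u : V => u k) hv.
by rewrite !ffunE eqxx alg_mpolyC => /eqP; rewrite mpolyC_eq0 => /eqP.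
Qed.

End Tensor.

Section Action.
Variables (F : fieldType) (m n d : nat) (xi : 'I_(m + n) -> 'I_(m + n) -> 'M[F]_d).
Local Notation V := (Vmod F m n d).

Lemma act_dx_hom0l pf i pg g k : act_dx_hom xi pf 0 i pg g k = 0.
Proof.
by rewrite /act_dx_hom Rmul0l Vtensor0 !big1 ?scaler0 ?addr0 // => j _;
  rewrite ?Rdx0 ?Rdy0 Rmul0l Vtensor0.
Qed.

Lemma act_dx_hom0r pf f i pg k : act_dx_hom xi pf f i pg 0 k = 0.
Proof.
by rewrite /act_dx_hom Rdx0 Rmul0r Vtensor0 !big1 ?scaler0 ?addr0 // => j _;
  rewrite Rmul0r Vtensor0.
Qed.

Lemma act_dy_hom0l pf i pg g k : act_dy_hom xi pf 0 i pg g k = 0.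
Proof.
by rewrite /act_dy_hom Rmul0l Vtensor0 !big1 ?scaler0 ?addr0 // => j _;
  rewrite ?Rdx0 ?Rdy0 Rmul0l Vtensor0.
Qed.

Lemma act_dy_hom0r pf f i pg k : act_dy_hom xi pf f i pg 0 k = 0.
Proof.
by rewrite /act_dy_hom Rdy0 Rmul0r Vtensor0 !big1 ?scaler0 ?addr0 // => j _;
  rewrite Rmul0r Vtensor0.
Qed.

Definition Vdx i (u : V) : V := [ffun k => Rdx i (u k)].
Definition Vdy i (u : V) : V := [ffun k => Rdy i (u k)].

Lemma act_dx_R1 i u : act_dx xi (R1 F m n) i u = Vdx i u.
Proof.
rewrite /act_dx Reven_R1 Rodd_R1 -[RHS]Vtensor_delta_sum; apply: eq_bigr => k _.
rewrite !act_dx_hom0l !addr0 /act_dx_hom !big1 ?scaler0 ?addr0;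
  try by move=> j _; rewrite ?Rdx_R1 ?Rdy_R1 Rmul0l Vtensor0.
by rewrite !Rmul1l -VtensorD -RdxD Reven_add_Rodd ffunE.
Qed.

Lemma act_dy_R1 i u : act_dy xi (R1 F m n) i u = Vdy i u.
Proof.
rewrite /act_dy Reven_R1 Rodd_R1 -[RHS]Vtensor_delta_sum; apply: eq_bigr => k _.
rewrite !act_dy_hom0l !addr0 /act_dy_hom !big1 ?scaler0 ?addr0;
  try by move=> j _; rewrite ?Rdx_R1 ?Rdy_R1 Rmul0l Vtensor0.
by rewrite !Rmul1l -VtensorD -RdyD Reven_add_Rodd ffunE.
Qed.

Lemma act_dx_Rxvar_Vone j i w :
  act_dx xi (Rxvar F n j) i (Vone m n w) = Vone m n (xi (lshift n j) (lshift n i) *m w).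
Proof.
rewrite /act_dx Reven_Rxvar Rodd_Rxvar -Vone_mulmx; apply: eq_bigr => k _.
rewrite !act_dx_hom0l VoneE Rodd_scaleR1 Reven_scaleR1 act_dx_hom0r !addr0 /act_dx_hom.
rewrite RdxZ Rdx_R1 scaler0 Rmul0r Vtensor0 add0r [X in _ + _ *: X]big1 ?scaler0 ?addr0.
  by under eq_bigr do rewrite Rdx_Rxvar; rewrite Vtensor_kronecker.
by move=> l _; rewrite Rdy_Rxvar Rmul0l Vtensor0.
Qed.

Lemma act_dy_Rxvar_Vone j i w :
  act_dy xi (Rxvar F n j) i (Vone m n w) = Vone m n (xi (lshift n j) (rshift m i) *m w).
Proof.
rewrite /act_dy Reven_Rxvar Rodd_Rxvar -Vone_mulmx; apply: eq_bigr => k _.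
rewrite !act_dy_hom0l VoneE Rodd_scaleR1 Reven_scaleR1 act_dy_hom0r !addr0 /act_dy_hom.
rewrite RdyZ Rdy_R1 scaler0 Rmul0r Vtensor0 add0r [X in _ + _ *: X]big1 ?scaler0 ?addr0.
  by under eq_bigr do rewrite Rdx_Rxvar; rewrite Vtensor_kronecker /bsign expr0 scale1r.
by move=> l _; rewrite Rdy_Rxvar Rmul0l Vtensor0.
Qed.

Lemma act_dx_Ryvar_Vone j i w :
  act_dx xi (Ryvar F m j) i (Vone m n w) = Vone m n (xi (rshift m j) (lshift n i) *m w).
Proof.
rewrite /act_dx Reven_Ryvar Rodd_Ryvar -Vone_mulmx; apply: eq_bigr => k _.
rewrite !act_dx_hom0l VoneE Rodd_scaleR1 Reven_scaleR1 act_dx_hom0r !add0r addr0 /act_dx_hom.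
rewrite RdxZ Rdx_R1 scaler0 Rmul0r Vtensor0 add0r [X in X + _]big1 ?add0r.
  by under eq_bigr do rewrite Rdy_Ryvar; rewrite Vtensor_kronecker /bsign expr0 scale1r.
by move=> l _; rewrite Rdx_Ryvar Rmul0l Vtensor0.
Qed.

Lemma act_dy_Ryvar_Vone j i w :
  act_dy xi (Ryvar F m j) i (Vone m n w) = Vone m n (xi (rshift m j) (rshift m i) *m w).
Proof.
rewrite /act_dy Reven_Ryvar Rodd_Ryvar -Vone_mulmx; apply: eq_bigr => k _.
rewrite !act_dy_hom0l VoneE Rodd_scaleR1 Reven_scaleR1 act_dy_hom0r !add0r addr0 /act_dy_hom.
rewrite RdyZ Rdy_R1 scaler0 Rmul0r Vtensor0 add0r [X in _ *: X + _]big1 ?scaler0 ?add0r.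
  by under eq_bigr do rewrite Rdy_Ryvar; rewrite Vtensor_kronecker /bsign expr0 scale1r.
by move=> l _; rewrite Rdx_Ryvar Rmul0l Vtensor0.
Qed.

End Action.

Lemma mderivm_lead_const (F : fieldType) (Fchar0 : [pchar F] =i pred0) (m d : nat)
    (p : 'I_d -> {mpoly F[m]}) (k1 : 'I_d) : p k1 != 0 ->
  exists mon, exists2 w : 'cV[F]_d, w != 0 & forall k, mderivm mon (p k) = (w k 0)%:MP.
Proof.
move=> pk1; have [k0 _ hmax] := @arg_maxnP _ k1 predT (fun k => msize (p k)) isT.
have pk0 : p k0 != 0.
  by rewrite -msize_poly_eq0 -lt0n (leq_trans _ (hmax k1 isT)) // lt0n msize_poly_eq0.
pose mon := mlead (p k0).
(* mon has total degree msize (p k0) - 1, the largest one occurring in any p k *)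
have above_mon k m' : m' != 0%MM -> (p k)@_(mon + m') = 0.
  move=> hm'; apply/eqP; rewrite -[_ == 0]negbK -mcoeff_msupp; apply: msize_mdeg_ge.
  apply: leq_trans (hmax k isT) _; rewrite -(mlead_deg pk0) mdegD -/mon -addn1 leq_add2l.
  by rewrite lt0n mdeg_eq0.
exists mon, (\col_k (mderivm mon (p k))@_0).
  apply/eqP=> /matrixP /(_ k0 0); rewrite !mxE mcoeff_mderivm addm0 => /eqP.
  rewrite -mulr_natr mulf_eq0 mleadc_eq0 (negbTE pk0) /= ((pcharf0P F).1 Fchar0).
  by rewrite -[_ == 0%N]negbK -lt0n prodn_gt0 // => i; rewrite ffactnn fact_gt0.
move=> k; apply/mpolyP=> m'; rewrite mcoeffC mxE.
have [->|hm'] := eqVneq m' 0%MM; first by rewrite mulr1.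
by rewrite mulr0 mcoeff_mderivm above_mon // mul0rn.
Qed.

Section Submodule.
Variables (F : fieldType) (m n d : nat) (pL : 'I_d -> bool)
  (xi : 'I_(m + n) -> 'I_(m + n) -> 'M[F]_d).
Local Notation V := (Vmod F m n d).
Variables (M : V -> Prop) (hM : is_submodule pL xi M).

Lemma Vmod_neq0P (u : V) : u != 0 -> exists k S, u k S != 0.
Proof.
move=> /eqP hu.
case: (pickP [pred kS : 'I_d * {set 'I_n} | u kS.1 kS.2 != 0]) => [[k S] hkS|h].
  by exists k, S.
case: hu; apply/ffunP=> k; apply/ffunP=> S; apply/eqP; rewrite !ffunE.
exact/negbFE/(h (k, S)).
Qed.

Lemma Vmod_neq0 (u : V) k S : u k S != 0 -> u != 0.
Proof. by apply: contraNneq => ->; rewrite !ffunE. Qed.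

Lemma submodule_Vdx i u : M u -> M (Vdx i u).
Proof. by case: hM => _ _ hx _ Mu; rewrite -(act_dx_R1 xi); apply: hx. Qed.

Lemma submodule_Vdy i u : M u -> M (Vdy i u).
Proof. by case: hM => _ _ _ hy Mu; rewrite -(act_dy_R1 xi); apply: hy. Qed.

Lemma submodule_ydeg0 s u : M u -> u != 0 -> (forall k S, u k S != 0 -> (#|S| <= s)%N) ->
  exists u', [/\ M u', u' != 0 & forall k S, S != set0 -> u' k S = 0].
Proof.
elim: s u => [|s IH] u Mu hu hs.
  exists u; split=> // k S hS; apply/eqP; apply: contraNT hS => h.
  by rewrite -cards_eq0 -leqn0 (hs k).
have [/existsP[k /existsP[S /andP[hk /eqP hS]]]|htop] :=
  boolP [exists k, exists S, (u k S != 0) && (#|S| == s.+1)]; last first.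
  apply: (IH u) => // k S hk; have := hs k S hk.
  rewrite leq_eqVlt ltnS => /orP[/eqP e|//]; exfalso.
  by move/existsPn: htop => /(_ k)/existsPn/(_ S); rewrite hk e eqxx.
have /set0Pn[t ht] : S != set0 by rewrite -cards_eq0 hS.
apply: (IH (Vdy t u)); first exact: submodule_Vdy.
  apply: (@Vmod_neq0 _ k (S :\ t)); rewrite !ffunE !inE eqxx /=.
  by rewrite setD1K // scaler_eq0 negb_or hk signr_eq0.
move=> k' U; rewrite !ffunE; case: ifP => [_|htU]; first by rewrite eqxx.
rewrite scaler_eq0 negb_or => /andP[_ /hs].
by rewrite cardsU1 htU add1n ltnS.
Qed.

Definition Vmap (h : {mpoly F[m]} -> {mpoly F[m]}) (u : V) : V :=
  [ffun k => [ffun S => h (u k S)]].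

Lemma submodule_Vmap_mderivm mon u : M u -> M (Vmap (mderivm mon) u).
Proof.
have -> : Vmap (mderivm mon) u =
    Vmap (foldr (@mderiv _ _) ^~ (flatten [seq nseq (mon i) i | i <- enum 'I_m])) u.
  by apply/ffunP=> k; apply/ffunP=> S; rewrite !ffunE mderivm_foldr.
elim: (flatten _) => [|i s IH] Mu.
  by rewrite (_ : Vmap _ u = u) //; apply/ffunP=> k; apply/ffunP=> S; rewrite !ffunE.
have -> : Vmap (foldr (@mderiv _ _) ^~ (i :: s)) u = Vdx i (Vmap (foldr (@mderiv _ _) ^~ s) u).
  by apply/ffunP=> k; apply/ffunP=> S; rewrite !ffunE.
exact/submodule_Vdx/IH.
Qed.

Lemma submodule_Vone_neq0 (Fchar0 : [pchar F] =i pred0) u :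
    M u -> u != 0 -> (forall k S, S != set0 -> u k S = 0) ->
  exists2 w : 'cV[F]_d, w != 0 & M (Vone m n w).
Proof.
move=> Mu /Vmod_neq0P[k1 [S hk1S]] hy.
have hk1 : u k1 set0 != 0.
  by have [<-//|/hy hS] := eqVneq S set0; rewrite hS eqxx in hk1S.
have [mon [w hw hmon]] := mderivm_lead_const Fchar0 (p := fun k => u k set0) hk1.
exists w => //; rewrite (_ : Vone m n w = Vmap (mderivm mon) u).
  exact: submodule_Vmap_mderivm.
apply/ffunP=> k; apply/ffunP=> S'; rewrite !ffunE.
have [->|hS'] := eqVneq S' set0; first by rewrite alg_mpolyC hmon.
by rewrite hy // scaler0 linear0.
Qed.

Lemma Veven_Vone (w : 'cV[F]_d) : Veven pL (Vone m n w) = Vone m n (cpart pL false w).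
Proof.
apply/ffunP=> k; rewrite !ffunE mxE Rodd_scaleR1 Reven_scaleR1.
by case: (pL k); rewrite ?scale0r.
Qed.

Lemma submodule_Vone_all (hirr : rep_irreducible pL xi) (w : 'cV[F]_d) :
  w != 0 -> M (Vone m n w) -> forall v, M (Vone m n v).
Proof.
move=> hw Mw; case: hM => [[M0 [MD MZ]] Meven Mdx Mdy].
have [/(_ w Mw) w0|//] : (forall v, M (Vone m n v) -> v = 0) \/ (forall v, M (Vone m n v));
  last by rewrite w0 eqxx in hw.
apply: hirr.
- split; first by rewrite Vone0.
  by split=> [u v Mu Mv|c u Mu]; rewrite ?VoneD ?VoneZ; [apply: MD | apply: MZ].
- by move=> v Mv; rewrite -Veven_Vone; apply: Meven.
- move=> a b v Mv; rewrite -(splitK a) -(splitK b).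
  case: (split a) => j; case: (split b) => i /=.
  + by rewrite -act_dx_Rxvar_Vone; apply: Mdx.
  + by rewrite -act_dy_Rxvar_Vone; apply: Mdy.
  + by rewrite -act_dx_Ryvar_Vone; apply: Mdx.
  + by rewrite -act_dy_Ryvar_Vone; apply: Mdy.
Qed.

Lemma submodule_neq0_Vone (Fchar0 : [pchar F] =i pred0) (hirr : rep_irreducible pL xi) :
  (exists u, M u /\ u != 0) -> forall v, M (Vone m n v).
Proof.
case=> u [Mu hu].
have [u' [Mu' hu' hy]] := submodule_ydeg0 Mu hu (fun k S _ => max_card (mem S)).
have [w hw Mw] := submodule_Vone_neq0 Fchar0 Mu' hu' hy.
exact (submodule_Vone_all hirr hw Mw).
Qed.

End Submodule.

Lemma gen_one_submodule (F : fieldType) (m n d : nat) (pL : 'I_d -> bool)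
    (xi : 'I_(m + n) -> 'I_(m + n) -> 'M[F]_d) :
  is_submodule pL xi (gen_one pL xi).
Proof.
split; [split; [|split] | | |].
- by move=> N [[N0 _] _ _ _].
- move=> u v hu hv N hN hN1; have [[_ [ND _]] _ _ _] := hN.
  exact: ND (hu N hN hN1) (hv N hN hN1).
- by move=> c u hu N hN hN1; have [[_ [_ NZ]] _ _ _] := hN; apply: NZ (hu N hN hN1).
- by move=> u hu N hN hN1; have [_ Neven _ _] := hN; apply: Neven (hu N hN hN1).
- by move=> f i u hu N hN hN1; have [_ _ Ndx _] := hN; apply: Ndx (hu N hN hN1).
- by move=> f i u hu N hN hN1; have [_ _ _ Ndy] := hN; apply: Ndy (hu N hN hN1).
Qed.

Theorem mainTheorem2 (F : closedFieldType) (Fchar0 : [pchar F] =i pred0)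
  (m n : nat) (hm : (1 <= m)%N) (hn : (1 <= n)%N)
  (lam : 'I_(m + n) -> F) (hlam : dominant_integral lam)
  (d : nat) (pL : 'I_d -> bool) (xi : 'I_(m + n) -> 'I_(m + n) -> 'M[F]_d)
  (hrep : is_even_rep pL xi) (hirr : rep_irreducible pL xi)
  (hhw : is_highest_weight xi lam) :
  (forall M : Vmod F m n d -> Prop, is_submodule pL xi M ->
     (exists u, M u /\ u != 0) -> forall v : 'cV[F]_d, M (Vone m n v))
  /\ is_simple_submodule pL xi (gen_one pL xi)
  /\ (forall M : Vmod F m n d -> Prop, is_simple_submodule pL xi M ->
        forall u, M u <-> gen_one pL xi u).
Proof.
have hVone M (hM : is_submodule pL xi M) := submodule_neq0_Vone hM Fchar0 hirr.
have gen_one_min M : is_submodule pL xi M -> (exists u, M u /\ u != 0) ->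
    forall u, gen_one pL xi u -> M u.
  by move=> hM hnz u hu; apply: hu => //; apply: hVone.
have [v0 [hv0 _]] := hhw.
have gen_one_v0 : gen_one pL xi (Vone m n v0) by move=> N _; apply.
have Vone_v0_neq0 : Vone m n v0 != 0 by rewrite Vone_eq0.
split=> //; split.
  split; first exact: gen_one_submodule.
  split; first by exists (Vone m n v0).
  move=> N hN hNG; have [hnz|hz] := classic (exists u, N u /\ u != 0).
    by right; apply: gen_one_min.
  by left=> u Nu; have [//|hu] := eqVneq u 0; case: hz; exists u.
move=> M [hM [hnz hsimp]] u; split; last exact: gen_one_min.
move=> Mu; have [hz|hall] := hsimp _ (gen_one_submodule pL xi) (gen_one_min M hM hnz).
  by move/eqP: Vone_v0_neq0; rewrite (hz _ gen_one_v0).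
exact: hall.
Qed.
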